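(* Let $x_0\in\mathbb{R}$ with $x_0\neq1$, let $\alpha>1$ and let \[ 0<T^*<\frac{\alpha-1}{\alpha(1+\alpha|x_0|)}. \] Then there exists a solution $x\in C^1([0,T^*])$ of the problem \[ \dot x(t)=x(t)-\max_{s\in[0,t]}x^2(s),\quad t\in[0,T^*],\qquad x(0)=x_0. \] *)

From Stdlib Require Import Reals.
Open Scope R_scope.

Definition is_max_on (f : R -> R) (a b m : R) : Prop :=
  (exists s, a <= s <= b /\ f s = m) /\
  (forall s, a <= s <= b -> f s <= m).

Definition continuous_within (a b : R) (f : R -> R) (t : R) : Prop :=
  forall eps, 0 < eps -> exists delta, 0 < delta /\
    forall s, a <= s <= b -> Rabs (s - t) < delta -> Rabs (f s - f t) < eps.

Definition has_deriv_within (a b : R) (f : R -> R) (t d : R) : Prop :=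
  forall eps, 0 < eps -> exists delta, 0 < delta /\
    forall h, h <> 0 -> a <= t + h <= b -> Rabs h < delta ->
      Rabs ((f (t + h) - f t) / h - d) < eps.

Definition C1_on_with_deriv (a b : R) (f f' : R -> R) : Prop :=
  (forall t, a <= t <= b -> has_deriv_within a b f t (f' t)) /\
  (forall t, a <= t <= b -> continuous_within a b f' t).

(* Both cases are solved explicitly.  For x0 < 1 take the logistic solution
   x(t) = x0 / ((1 - x0) e^-t + x0) of x' = x - x^2: while its denominator stays
   positive, |x| is nondecreasing, so the running maximum of x^2 is x(t)^2 and the
   equation is exactly the logistic one.  For x0 > 1 take the solution
   x(t) = x0^2 + (x0 - x0^2) e^t of x' = x - x0^2: it decreases from x0 and stays
   above -x0, so the running maximum of x^2 is x0^2 throughout.  Both facts hold as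
   long as |x0| < (1 + |x0|) e^-t, which the bound on T* guarantees on [0, T*]
   through the weaker bound T* (1 + |x0|) < 1. *)

From Stdlib Require Import Reals Lra Psatz.
From Coquelicot Require Import Coquelicot.
Open Scope R_scope.

Definition solves_running_max_ode (T x0 : R) (x x' : R -> R) : Prop :=
  C1_on_with_deriv 0 T x x' /\
  x 0 = x0 /\
  forall t, 0 <= t <= T ->
    exists m, is_max_on (fun s => (x s) ^ 2) 0 t m /\ x' t = x t - m.

Lemma exp_le_compat (x y : R) : x <= y -> exp x <= exp y.
Proof.
  intros [Hlt | ->]; [left; apply exp_increasing | right]; auto.
Qed.

Lemma is_max_on_at (f : R -> R) (a b s0 : R) :
  a <= s0 <= b -> (forall s, a <= s <= b -> f s <= f s0) -> is_max_on f a b (f s0).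
Proof.
  intros Hs0 Hle. split; [exists s0; auto | exact Hle].
Qed.

Lemma is_derive_has_deriv_within (a b : R) (f : R -> R) (t d : R) :
  is_derive f t d -> has_deriv_within a b f t d.
Proof.
  intros Hd eps Heps. apply is_derive_Reals in Hd.
  destruct (Hd eps Heps) as [delta Hdelta]. exists delta. split.
  - apply cond_pos.
  - intros h Hh _ Hsmall. now apply Hdelta.
Qed.

Lemma continuity_pt_continuous_within (a b : R) (f : R -> R) (t : R) :
  continuity_pt f t -> continuous_within a b f t.
Proof.
  intros Hc eps Heps.
  destruct (Hc eps Heps) as [delta [Hdelta Hclose]]. exists delta. split; [exact Hdelta |].
  intros s _ Hs. destruct (Req_dec s t) as [-> | Hne].
  - rewrite Rminus_diag, Rabs_R0. exact Heps.
  - apply (Hclose s). split; [split; [exact I | auto] | exact Hs].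
Qed.

Lemma is_derive_continuity_pt (f : R -> R) (t d : R) :
  is_derive f t d -> continuity_pt f t.
Proof.
  intros Hd. apply continuity_pt_filterlim.
  apply (ex_derive_continuous f t). now exists d.
Qed.

Lemma C1_on_autonomous (a b : R) (F f : R -> R) :
  continuity F ->
  (forall t, a <= t <= b -> is_derive f t (F (f t))) ->
  C1_on_with_deriv a b f (fun t => F (f t)).
Proof.
  intros HF Hf. split; intros t Ht.
  - now apply is_derive_has_deriv_within, Hf.
  - apply continuity_pt_continuous_within, (continuity_pt_comp f F).
    + exact (is_derive_continuity_pt _ _ _ (Hf t Ht)).
    + apply HF.
Qed.

Lemma time_bound_weaken (alpha a T : R) :
  1 < alpha -> 0 <= a -> T < (alpha - 1) / (alpha * (1 + alpha * a)) -> T * (1 + a) < 1.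
Proof.
  intros Halpha Ha HT.
  assert (Hden : 0 < alpha * (1 + alpha * a)) by nra.
  apply (Rmult_lt_compat_r _ _ _ Hden) in HT.
  unfold Rdiv in HT. rewrite Rmult_assoc, Rinv_l in HT by lra.
  assert (0 <= a * alpha * (alpha - 1)) by (apply Rmult_le_pos; nra).
  nra.
Qed.

(* From e^-t >= 1 - t. *)
Lemma lt_exp_neg (a t : R) : 0 <= a -> t * (1 + a) < 1 -> a < (1 + a) * exp (- t).
Proof.
  intros Ha Ht. pose proof (exp_ineq1_le (- t)). nra.
Qed.

Section Logistic.

Variable x0 : R.
Hypothesis x0_lt_1 : x0 < 1.

Definition logistic_denom (t : R) : R := (1 - x0) * exp (- t) + x0.

Definition logistic (t : R) : R := x0 / logistic_denom t.

Lemma logistic_0 : logistic 0 = x0.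
Proof.
  unfold logistic, logistic_denom. rewrite Ropp_0, exp_0. field_simplify; [reflexivity | lra].
Qed.

Lemma logistic_denom_pos (t : R) :
  Rabs x0 < (1 + Rabs x0) * exp (- t) -> 0 < logistic_denom t.
Proof.
  intros Hbound. pose proof (exp_pos (- t)). unfold logistic_denom.
  destruct (Rle_or_lt 0 x0).
  - nra.
  - rewrite Rabs_left in Hbound by lra. nra.
Qed.

Lemma logistic_denom_antitone (s t : R) : s <= t -> logistic_denom t <= logistic_denom s.
Proof.
  intros Hst. unfold logistic_denom.
  pose proof (exp_le_compat (- t) (- s) ltac:(lra)). nra.
Qed.

Lemma is_derive_logistic (t : R) :
  logistic_denom t <> 0 -> is_derive logistic t (logistic t - logistic t ^ 2).
Proof.
  unfold logistic, logistic_denom. intros Hden. auto_derive; [exact Hden |]. field. exact Hden.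
Qed.

Lemma logistic_sqr_monotone (s t : R) :
  s <= t -> 0 < logistic_denom t -> logistic s ^ 2 <= logistic t ^ 2.
Proof.
  intros Hst Ht. pose proof (logistic_denom_antitone s t Hst) as Hts.
  unfold logistic, Rdiv. rewrite !Rpow_mult_distr.
  apply Rmult_le_compat_l; [apply pow2_ge_0 |].
  apply pow_incr. split.
  - left. apply Rinv_0_lt_compat. lra.
  - now apply Rinv_le_contravar.
Qed.

Lemma logistic_solves (T : R) :
  (forall t, 0 <= t <= T -> Rabs x0 < (1 + Rabs x0) * exp (- t)) ->
  solves_running_max_ode T x0 logistic (fun t => logistic t - logistic t ^ 2).
Proof.
  intros Hbound.
  assert (Hpos : forall t, 0 <= t <= T -> 0 < logistic_denom t)
    by (intros t Ht; now apply logistic_denom_pos, Hbound).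
  split; [| split].
  - apply (C1_on_autonomous 0 T (fun y => y - y ^ 2)); [reg |].
    intros t Ht. apply is_derive_logistic. specialize (Hpos t Ht). lra.
  - exact logistic_0.
  - intros t Ht. exists (logistic t ^ 2). split; [| reflexivity].
    apply (is_max_on_at (fun s => logistic s ^ 2)); [lra |].
    intros s Hs. apply logistic_sqr_monotone; [lra | apply Hpos; exact Ht].
Qed.

End Logistic.

Section Plateau.

Variable x0 : R.
Hypothesis x0_gt_1 : 1 < x0.

Definition plateau (t : R) : R := x0 ^ 2 + (x0 - x0 ^ 2) * exp t.

Lemma plateau_0 : plateau 0 = x0.
Proof. unfold plateau. rewrite exp_0. ring. Qed.

Lemma is_derive_plateau (t : R) : is_derive plateau t (plateau t - x0 ^ 2).
Proof. unfold plateau. auto_derive; [exact I | ring]. Qed.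

Lemma plateau_sqr_le (s : R) :
  0 <= s -> x0 < (1 + x0) * exp (- s) -> plateau s ^ 2 <= x0 ^ 2.
Proof.
  intros Hs Hbound.
  pose proof (exp_le_compat 0 s Hs) as Hexp. rewrite exp_0 in Hexp.
  assert (Hinv : exp s * exp (- s) = 1)
    by (rewrite <- exp_plus, Rplus_opp_r; exact exp_0).
  assert (Hupper : plateau s <= x0).
  { assert (0 <= (x0 ^ 2 - x0) * (exp s - 1)) by (apply Rmult_le_pos; nra).
    unfold plateau. nra. }
  (* Multiplying the bound by e^s: (x0 - 1) e^s <= x0 + 1, i.e. plateau s >= -x0. *)
  assert (Hlower : - x0 <= plateau s).
  { assert ((x0 - 1) * exp s <= x0 + 1) by nra. unfold plateau. nra. }
  simpl. nra.
Qed.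

Lemma plateau_solves (T : R) :
  (forall t, 0 <= t <= T -> x0 < (1 + x0) * exp (- t)) ->
  solves_running_max_ode T x0 plateau (fun t => plateau t - x0 ^ 2).
Proof.
  intros Hbound. split; [| split].
  - apply (C1_on_autonomous 0 T (fun y => y - x0 ^ 2)); [reg |].
    intros t _. apply is_derive_plateau.
  - exact plateau_0.
  - intros t Ht. exists (x0 ^ 2). split; [| reflexivity].
    rewrite <- plateau_0.
    apply (is_max_on_at (fun s => plateau s ^ 2)); [lra |].
    intros s Hs. rewrite plateau_0. apply plateau_sqr_le; [lra |]. apply Hbound. lra.
Qed.

End Plateau.

Theorem mainTheorem2 (x0 alpha Tstar : R) :
  x0 <> 1 ->
  1 < alpha ->
  0 < Tstar ->
  Tstar < (alpha - 1) / (alpha * (1 + alpha * Rabs x0)) ->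
  exists x x' : R -> R,
    C1_on_with_deriv 0 Tstar x x' /\
    x 0 = x0 /\
    forall t, 0 <= t <= Tstar ->
      exists m, is_max_on (fun s => (x s) ^ 2) 0 t m /\ x' t = x t - m.
Proof.
  intros Hx0 Halpha _ HT.
  pose proof (Rabs_pos x0) as Habs.
  pose proof (time_bound_weaken alpha (Rabs x0) Tstar Halpha Habs HT) as HT1.
  assert (Hbound : forall t, 0 <= t <= Tstar -> Rabs x0 < (1 + Rabs x0) * exp (- t)).
  { intros t Ht. apply lt_exp_neg; [exact Habs | nra]. }
  destruct (Rlt_or_le x0 1) as [Hlt | Hge].
  - exists (logistic x0), (fun t => logistic x0 t - logistic x0 t ^ 2).
    exact (logistic_solves x0 Hlt Tstar Hbound).
  - assert (Hgt : 1 < x0) by lra.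
    rewrite Rabs_right in Hbound by lra.
    exists (plateau x0), (fun t => plateau x0 t - x0 ^ 2).
    exact (plateau_solves x0 Hgt Tstar Hbound).
Qed.
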